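(* Let $(\mathcal G,p)$ be a CPS on the finite set $\Omega$ with $\mathcal G$ closed under unions and nonempty intersections and covering $\Omega$, and let $\widehat{\mathcal G}$ be its $1$-augmentation. Then: (i) there exists a CPS $(\widehat{\mathcal G},\widehat p)$ extending $(\mathcal G,p)$, i.e. $\widehat p_G=p_G$ for every $G\in\mathcal G$, which moreover satisfies (ii): whenever $K\in\widehat{\mathcal G}$, $L\subseteq K$ and $\widehat p_K(L)=1$, then $L\in\widehat{\mathcal G}$; (iii) for this extension, the $1$-augmentation of $(\widehat{\mathcal G},\widehat p)$ equals $\widehat{\mathcal G}$; (iv) $(\mathcal G,p)$ is $1$-closed if and only if $\widehat{\mathcal G}=\mathcal G$.
   Context: $\Omega$ is a finite set; every subset is an event. A CPS is a pair $(\mathcal G,p)$ where $\mathcal G$ is a family of nonempty subsets of $\Omega$ and $p$ assigns to each $G\in\mathcal G$ a probability measure $p_G$ on $\Omega$ with $p_G(G)=1$ and $p_G(E)=p_G(F)p_F(E)$ whenever $E\subseteq F\subseteq G$, $F,G\in\mathcal G$. For a CPS $(\mathcal G,p)$ let $\mathcal E=\{E\subseteq\Omega: p_G(E)=1 \text{ for some } G\in\mathcal G \text{ with } E\subseteq G\}$. The $1$-augmentation $\widehat{\mathcal G}$ of $(\mathcal G,p)$ is the smallest family of subsets of $\Omega$ that contains $\mathcal E$, is closed under unions and under nonempty intersections, and covers $\Omega$. $(\mathcal G,p)$ is $1$-closed if $\mathcal E=\mathcal G$. *)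

(* Omega is a finite type T; events are {set T}. *)
From HB Require Import structures.
From mathcomp Require Import all_boot all_order all_algebra.
From mathcomp Require Export reals.
Set Implicit Arguments. Unset Strict Implicit. Unset Printing Implicit Defensive.
Import Order.TTheory GRing.Theory Num.Theory.
Local Open Scope ring_scope.

Section CPS.
Variables (T : finType) (R : realType).

Definition prob_measure (mu : {ffun T -> R}) : Prop :=
  (forall x, 0 <= mu x) /\ \sum_x mu x = 1.

Definition meas (mu : {ffun T -> R}) (E : {set T}) : R := \sum_(x in E) mu x.

(* Conditional probability system (G, p): p G0 is only relevant for G0 \in G. *)
Definition CPS (G : {set {set T}}) (p : {set T} -> {ffun T -> R}) : Prop :=
  (forall G0, G0 \in G -> G0 != set0) /\
  (forall G0, G0 \in G -> prob_measure (p G0) /\ meas (p G0) G0 = 1) /\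
  (forall E F G0 : {set T}, F \in G -> G0 \in G -> E \subset F -> F \subset G0 ->
     meas (p G0) E = meas (p G0) F * meas (p F) E).

Definition calE (G : {set {set T}}) (p : {set T} -> {ffun T -> R}) : {set {set T}} :=
  [set E : {set T} | [exists G0 in G, (E \subset G0) && (meas (p G0) E == 1)]].

Definition closed_fam (H : {set {set T}}) : bool :=
  [forall A in H, forall B in H, A :|: B \in H] &&
  [forall A in H, forall B in H, (A :&: B != set0) ==> (A :&: B \in H)] &&
  (cover H == setT).

Definition augment (G : {set {set T}}) (p : {set T} -> {ffun T -> R}) : {set {set T}} :=
  \bigcap_(H : {set {set T}} | (calE G p \subset H) && closed_fam H) H.

Definition one_closed (G : {set {set T}}) (p : {set T} -> {ffun T -> R}) : Prop :=
  calE G p = G.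

End CPS.

From mathcomp Require Import all_boot all_order all_algebra.
Set Implicit Arguments. Unset Strict Implicit. Unset Printing Implicit Defensive.
Import Order.TTheory GRing.Theory Num.Theory.
Local Open Scope ring_scope.

(* Every CPS on a union-closed family is lexicographic: for some rank [r : T -> nat]
   and positive weights [w], each [p G] is [w] renormalised on the points of minimal
   rank in [G].  To see this, give rank 0 and weight [p Top] to the support of [p] at
   the largest set [Top], and recurse on the (smaller) family of sets missing that
   support.  The same formula on every nonempty set is a CPS on the 1-augmentation.
   If it gives [L \subset K] probability 1 at [K], then [L] contains the
   minimal-rank points of [K], hence [K :&: M] for [M] the globally minimal-rank
   points; as [p setT] lives on [M], [M :|: L] is an event of [calE], and
   [L = K :&: (M :|: L)] lies in the augmentation, which thus augments to itself. *)

Section Measure.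
Variables (T : finType) (R : realType).
Implicit Types (mu : {ffun T -> R}) (A E : {set T}).

Definition supp mu : {set T} := [set x | 0 < mu x].

Lemma meas0 mu : meas mu set0 = 0.
Proof. by rewrite /meas big_set0. Qed.

Lemma meas1 mu x : meas mu [set x] = mu x.
Proof. by rewrite /meas big_set1. Qed.

Lemma meas_setT mu : meas mu setT = \sum_x mu x.
Proof. by apply: eq_bigl => x; rewrite inE. Qed.

Lemma meas_gt0 mu A x :
  (forall y, 0 <= mu y) -> x \in A -> 0 < mu x -> 0 < meas mu A.
Proof. by move=> ge0 xA mux; rewrite /meas (bigD1 x) //= ltr_pwDl ?sumr_ge0. Qed.

Lemma notin_supp mu x : 0 <= mu x -> x \notin supp mu -> mu x = 0.
Proof. by rewrite inE -leNgt => ge0 le0; apply/eqP; rewrite eq_le le0. Qed.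

Lemma meas_setI_supp mu A :
  (forall x, 0 <= mu x) -> meas mu (A :&: supp mu) = meas mu A.
Proof.
move=> ge0; rewrite [RHS](bigID (mem (supp mu))) /= [X in _ + X]big1 ?addr0.
  by apply: eq_bigl => x; rewrite inE.
by move=> x /andP[_ /(notin_supp (ge0 x))].
Qed.

Lemma meas_eq1P mu A : prob_measure mu ->
  meas mu A = 1 <-> (forall x, x \notin A -> mu x = 0).
Proof.
move=> [ge0 sum1].
have -> : meas mu A = 1 - \sum_(x | x \notin A) mu x.
  by rewrite -sum1 (bigID (mem A)) /= addrK.
split=> [/eqP | out0]; last by rewrite big1 ?subr0.
rewrite subr_eq addrC -subr_eq subrr eq_sym => /eqP.
by move/(psumr_eq0P (fun x _ => ge0 x)).
Qed.

Lemma supp_sub mu A : prob_measure mu -> meas mu A = 1 -> supp mu \subset A.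
Proof.
move=> mu_prob /(meas_eq1P A mu_prob) out0; apply/subsetP => x.
by apply: contraTT => /out0; rewrite inE => ->; rewrite ltxx.
Qed.

Lemma supp_neq0 mu : prob_measure mu -> supp mu != set0.
Proof.
case=> ge0 sum1; apply/set0Pn.
have sum_neq0 : \sum_x mu x <> 0 by rewrite sum1; apply/eqP/oner_neq0.
have [x /andP[_ mux]] := psumr_neq0P (fun x _ => ge0 x) sum_neq0.
by exists x; rewrite inE.
Qed.

End Measure.

Section Lexicographic.
Variables (T : finType) (R : realType).
Implicit Types (r : T -> nat) (w : {ffun T -> R}) (A B E F : {set T}).

Definition minrank r A : {set T} := [set x in A | [forall y in A, r x <= r y]%N].

Definition lexp r w A : {ffun T -> R} :=
  [ffun x => if x \in minrank r A then w x / meas w (minrank r A) else 0].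

Lemma minrank_sub r A : minrank r A \subset A.
Proof. by apply/subsetP => x; rewrite inE => /andP[]. Qed.

Lemma minrank_neq0 r A : A != set0 -> minrank r A != set0.
Proof.
case/set0Pn => x0 Ax0; have [x Ax x_min] := arg_minnP r Ax0.
by apply/set0Pn; exists x; rewrite inE; apply/andP; split; last apply/forall_inP.
Qed.

Lemma setI_minrank_sub r A B : A \subset B -> A :&: minrank r B \subset minrank r A.
Proof.
move=> /subsetP AB; apply/subsetP => x; rewrite !inE => /and3P[Ax _ /forall_inP x_min].
by rewrite Ax; apply/forall_inP => y /AB; apply: x_min.
Qed.

Lemma minrank_subset r A B : A \subset B -> A :&: minrank r B != set0 ->
  minrank r A = A :&: minrank r B.
Proof.
move=> AB /set0Pn[z]; rewrite !inE => /and3P[Az _ /forall_inP z_min].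
apply/eqP; rewrite eqEsubset setI_minrank_sub // andbT; apply/subsetP => x.
rewrite !inE => /andP[Ax /forall_inP x_min]; rewrite Ax (subsetP AB) //=.
by apply/forall_inP => y By; apply: leq_trans (x_min z Az) (z_min y By).
Qed.

Lemma meas_lexp r w A E :
  meas (lexp r w A) E = meas w (E :&: minrank r A) / meas w (minrank r A).
Proof.
rewrite /meas mulr_suml; under eq_bigr => x _ do rewrite ffunE.
by rewrite -big_mkcondr; apply: eq_bigl => x; rewrite !inE.
Qed.

Variable w : {ffun T -> R}.
Hypothesis w_gt0 : forall x, 0 < w x.

Let w_ge0 x : 0 <= w x. Proof. exact: ltW. Qed.

Lemma meas_minrank_gt0 r A : A != set0 -> 0 < meas w (minrank r A).
Proof. by move=> /(minrank_neq0 r)/set0Pn[x xM]; apply: meas_gt0 xM _. Qed.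

Lemma lexp_gt0 r A x : (0 < lexp r w A x) = (x \in minrank r A).
Proof.
rewrite ffunE; case: ifPn => xM; last by rewrite ltxx.
by rewrite divr_gt0 // (meas_gt0 _ xM).
Qed.

Lemma meas_lexp_sup r A E : A != set0 -> minrank r A \subset E ->
  meas (lexp r w A) E = 1.
Proof.
move=> /(meas_minrank_gt0 r) M_gt0 /setIidPr ME.
by rewrite meas_lexp ME divff ?gt_eqF.
Qed.

Lemma lexp_prob r A : A != set0 -> prob_measure (lexp r w A).
Proof.
move=> A_neq0; split; last by rewrite -meas_setT meas_lexp_sup ?subsetT.
by move=> x; rewrite le_eqVlt lexp_gt0 ffunE; case: ifP; rewrite ?eqxx ?orbT.
Qed.

Lemma lexp_chain r E F B : E \subset F -> F \subset B ->
  meas (lexp r w B) E = meas (lexp r w B) F * meas (lexp r w F) E.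
Proof.
move=> EF FB; rewrite !meas_lexp.
have [FM0|FM_neq0] := eqVneq (F :&: minrank r B) set0.
  have -> : E :&: minrank r B = set0.
    by apply/eqP; rewrite -subset0 -FM0 setSI.
  by rewrite FM0 !meas0 !mul0r.
have F_neq0 : F != set0 by apply: contraNneq FM_neq0 => ->; rewrite set0I.
rewrite (minrank_subset FB FM_neq0) setIA (setIidPl EF) [RHS]mulrC mulrA divfK //.
by rewrite -(minrank_subset FB FM_neq0) gt_eqF ?meas_minrank_gt0.
Qed.

Lemma CPS_lexp r (H : {set {set T}}) :
  (forall A, A \in H -> A != set0) -> CPS H (lexp r w).
Proof.
move=> H_neq0; split=> //; split=> [A /H_neq0 A_neq0 | E F B _ _]; last first.
  exact: lexp_chain.
by split; [apply: lexp_prob | apply: meas_lexp_sup (minrank_sub r A)].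
Qed.

End Lexicographic.

Section Layer.
Variables (T : finType) (R : realType).
Variables (S : {set T}) (r : T -> nat) (w0 w : {ffun T -> R}).
Implicit Types (A : {set T}).

Definition layer_rank x := if x \in S then 0%N else (r x).+1.

Definition layer_weight : {ffun T -> R} :=
  [ffun x => if x \in S then w0 x else w x].

Lemma lexp_layer_disjoint A : [disjoint A & S] ->
  lexp layer_rank layer_weight A = lexp r w A.
Proof.
move=> AS; have notS x : x \in A -> x \in S = false by apply: disjointFr.
have M_eq : minrank layer_rank A = minrank r A.
  apply/setP => x; rewrite !inE; case Ax: (x \in A) => //=.
  by apply: eq_forallb_in => y Ay; rewrite /layer_rank notS ?notS.
have w_eq : {in minrank r A, layer_weight =1 w}.
  by move=> x /(subsetP (minrank_sub r A)) Ax; rewrite ffunE notS.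
apply/ffunP => x; rewrite !ffunE M_eq; case: ifP => // xM.
by rewrite notS ?(subsetP (minrank_sub r A)) //; congr (_ / _); apply: eq_bigr.
Qed.

Lemma lexp_layer_meet A : ~~ [disjoint A & S] ->
  lexp layer_rank layer_weight A =
  [ffun x => if x \in A :&: S then w0 x / meas w0 (A :&: S) else 0].
Proof.
rewrite -setI_eq0 => /set0Pn[z]; rewrite inE => /andP[Az Sz].
have M_eq : minrank layer_rank A = A :&: S.
  apply/setP => x; rewrite !inE; case Ax: (x \in A) => //=.
  case Sx: (x \in S); first by apply/forall_inP => y _; rewrite /layer_rank Sx.
  by apply/forall_inP => /(_ z Az); rewrite /layer_rank Sx Sz.
have w_eq : {in A :&: S, layer_weight =1 w0}.
  by move=> x; rewrite inE ffunE => /andP[_ ->].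
apply/ffunP => x; rewrite !ffunE M_eq; case: ifP => // xAS.
by move: (xAS); rewrite inE => /andP[_ ->]; congr (_ / _); apply: eq_bigr.
Qed.

End Layer.

Section Representation.
Variables (T : finType) (R : realType).
Implicit Types (H : {set {set T}}) (p : {set T} -> {ffun T -> R}).

Definition union_closed H := forall A B, A \in H -> B \in H -> A :|: B \in H.

Lemma cover_mem H : union_closed H -> H != set0 -> cover H \in H.
Proof.
move=> unionH /set0Pn[B HB].
suff /(_ B HB) : forall A, A \in H -> A :|: cover H \in H.
  by rewrite (setUidPr (bigcup_sup _ HB)).
rewrite /cover; apply: (big_ind (fun X => forall A, A \in H -> A :|: X \in H)).
- by move=> A HA; rewrite setU0.
- move=> X Y hX hY A HA; rewrite -(setUid A) setUACA.
  exact: unionH (hX _ HA) (hY _ HA).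
- by move=> C HC A HA; apply: unionH.
Qed.

Lemma CPS_sub H H' p : H' \subset H -> CPS H p -> CPS H' p.
Proof.
move=> /subsetP H'H [neq0 [prob chain]]; split; first by move=> A /H'H /neq0.
by split=> [A /H'H /prob | E F B /H'H HF /H'H HB]; last exact: chain.
Qed.

Lemma CPS_cond H p F B : CPS H p -> F \in H -> B \in H -> F \subset B ->
  meas (p B) F != 0 -> p F = [ffun x => if x \in F then p B x / meas (p B) F else 0].
Proof.
move=> [_ [prob chain]] HF HB FB mF_neq0; apply/ffunP => x; rewrite ffunE.
case: ifPn => [xF | /(meas_eq1P _ (prob F HF).1).1 -> //]; last exact: (prob F HF).2.
have := chain [set x] F B HF HB; rewrite sub1set xF !meas1 => /(_ isT FB) ->.
by rewrite [RHS]mulrC mulKf.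
Qed.

Lemma CPS_cond_supp H p F B : CPS H p -> F \in H -> B \in H -> F \subset B ->
  ~~ [disjoint F & supp (p B)] ->
  p F = [ffun x => if x \in F :&: supp (p B) then p B x / meas (p B) (F :&: supp (p B))
                   else 0].
Proof.
move=> cpsH HF HB FB; have [[ge0 _] _] := cpsH.2.1 B HB.
rewrite -setI_eq0 => /set0Pn[z zFS].
rewrite meas_setI_supp // (CPS_cond cpsH HF HB FB); last first.
  by move: zFS; rewrite !inE => /andP[zF zS]; rewrite gt_eqF // (meas_gt0 ge0 zF).
apply/ffunP => x; rewrite !ffunE inE; case: (x \in F) => //=.
by case: ifPn => // /(notin_supp (ge0 x)) ->; rewrite mul0r.
Qed.

Lemma CPS_lexp_repr n H p : (#|cover H| < n)%N -> union_closed H -> CPS H p ->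
  exists r (w : {ffun T -> R}), (forall x, 0 < w x) /\ {in H, p =1 lexp r w}.
Proof.
elim: n H p => // n IH H p cardH unionH cpsH.
have [-> | H_neq0] := eqVneq H set0.
  by exists (fun=> 0%N), [ffun=> 1]; split=> [x | B]; rewrite ?ffunE ?inE.
set Top := cover H; have TopH : Top \in H := cover_mem unionH H_neq0.
have [Top_prob Top1] := cpsH.2.1 Top TopH.
set S := supp (p Top).
set H' := [set B in H | [disjoint B & S]].
have H'H : H' \subset H by apply/subsetP => B; rewrite inE => /andP[].
have [r [w [w_gt0 reprH']]] : exists r (w : {ffun T -> R}),
    (forall x, 0 < w x) /\ {in H', p =1 lexp r w}.
  apply: IH (CPS_sub H'H cpsH); last first.
    move=> A B; rewrite !inE => /andP[HA AS] /andP[HB BS].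
    by rewrite unionH // -setI_eq0 setIUl setU_eq0 !setI_eq0 AS.
  have [x0 Sx0] := set0Pn _ (supp_neq0 Top_prob).
  rewrite ltnS in cardH; apply: leq_trans (proper_card _) cardH; apply/properP; split.
    apply/subsetP => x /bigcupP[B HB' xB].
    by apply/bigcupP; exists B; rewrite ?(subsetP H'H).
  exists x0; first exact: subsetP (supp_sub Top_prob Top1) x0 Sx0.
  by apply/bigcupP => -[B]; rewrite inE => /andP[_ BS] /(disjointFr BS); rewrite Sx0.
exists (layer_rank S r), (layer_weight S (p Top) w); split.
  by move=> x; rewrite ffunE; case: ifPn; rewrite ?inE.
move=> B HB; have [BS | BS] := boolP [disjoint B & S].
  by rewrite lexp_layer_disjoint // reprH' // inE HB.
by rewrite lexp_layer_meet // (CPS_cond_supp cpsH HB TopH) // bigcup_sup.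
Qed.

End Representation.

Section Augmentation.
Variables (T : finType) (R : realType).
Implicit Types (H : {set {set T}}).

Lemma closed_famU H : closed_fam H -> union_closed H.
Proof.
by move=> /andP[/andP[/forall_inP unionH _] _] A B /unionH /forall_inP; apply.
Qed.

Lemma closed_famI H A B : closed_fam H -> A \in H -> B \in H -> A :&: B != set0 ->
  A :&: B \in H.
Proof.
by move=> /andP[/andP[_ /forall_inP meetH] _] /meetH /forall_inP meetA /meetA /implyP.
Qed.

Lemma closed_fam_cover H : closed_fam H -> cover H = setT.
Proof. by move=> /andP[_ /eqP]. Qed.

Lemma closed_famP H : union_closed H ->
  (forall A B, A \in H -> B \in H -> A :&: B != set0 -> A :&: B \in H) ->
  cover H = setT -> closed_fam H.
Proof.
move=> unionH meetH coverH; rewrite /closed_fam coverH eqxx andbT.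
apply/andP; split; apply/forall_inP => A HA; apply/forall_inP => B HB.
  exact: unionH.
by apply/implyP; apply: meetH.
Qed.

Lemma closed_fam_setT H (x : T) : closed_fam H -> setT \in H.
Proof.
move=> closedH; rewrite -(closed_fam_cover closedH).
apply: cover_mem (closed_famU closedH) _; apply/set0Pn.
move: (in_setT x); rewrite -(closed_fam_cover closedH) => /bigcupP[B HB _].
by exists B.
Qed.

Variables (G : {set {set T}}) (p : {set T} -> {ffun T -> R}).

Lemma augment_min H : calE G p \subset H -> closed_fam H -> augment G p \subset H.
Proof. by move=> EH closedH; apply: bigcap_inf; rewrite EH closedH. Qed.

Lemma calE_sub_augment : calE G p \subset augment G p.
Proof. by apply/bigcapsP => H /andP[]. Qed.

Lemma calE_neq0 E : E \in calE G p -> E != set0.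
Proof.
rewrite inE => /exists_inP[B _ /andP[_]]; apply: contraTneq => ->.
by rewrite meas0 eq_sym oner_eq0.
Qed.

Lemma augment_neq0 K : K \in augment G p -> K != set0.
Proof.
suff /subsetP sub_neq0 : augment G p \subset [set B : {set T} | B != set0].
  by move=> /sub_neq0; rewrite inE.
apply: augment_min; first by apply/subsetP => E /calE_neq0; rewrite inE.
apply: closed_famP.
- move=> A B; rewrite !inE => /set0Pn[x Ax] _.
  by apply/set0Pn; exists x; rewrite inE Ax.
- by move=> A B _ _; rewrite inE.
apply/setP => x; rewrite inE; apply/bigcupP; exists [set x]; last by rewrite inE.
by rewrite inE; apply/set0Pn; exists x; rewrite inE.
Qed.

Lemma CPS_sub_calE : CPS G p -> G \subset calE G p.
Proof.
move=> [_ [prob _]]; apply/subsetP => B HB; rewrite inE.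
by apply/exists_inP; exists B; rewrite // subxx (prob B HB).2 eqxx.
Qed.

Lemma closed_augment : CPS G p -> cover G = setT -> closed_fam (augment G p).
Proof.
move=> cpsG coverG; apply: closed_famP.
- move=> A B /bigcapP augA /bigcapP augB; apply/bigcapP => H /andP[EH closedH].
  by apply: (closed_famU closedH); [apply: augA | apply: augB]; rewrite EH.
- move=> A B /bigcapP augA /bigcapP augB AB; apply/bigcapP => H /andP[EH closedH].
  by apply: (closed_famI closedH) AB; [apply: augA | apply: augB]; rewrite EH.
- apply/setP => x; rewrite inE; move: (in_setT x); rewrite -coverG.
  case/bigcupP => B HB xB; apply/bigcupP; exists B => //.
  exact: subsetP calE_sub_augment _ (subsetP (CPS_sub_calE cpsG) _ HB).
Qed.

Lemma augment_id : closed_fam (calE G p) -> augment G p = calE G p.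
Proof.
by move=> closedE; apply/eqP; rewrite eqEsubset augment_min ?calE_sub_augment.
Qed.

End Augmentation.

Section LexicographicExtension.
Variables (T : finType) (R : realType).
Variables (G : {set {set T}}) (p : {set T} -> {ffun T -> R}).
Variables (r : T -> nat) (w : {ffun T -> R}).
Hypotheses (cpsG : CPS G p) (closedG : closed_fam G).
Hypotheses (w_gt0 : forall x, 0 < w x) (reprG : {in G, p =1 lexp r w}).

Lemma mem_augment_lexp (K L : {set T}) : K \in augment G p -> L \subset K ->
  meas (lexp r w K) L = 1 -> L \in augment G p.
Proof.
move=> KA LK KL1; have K_neq0 := augment_neq0 KA.
have [x0 Lx0] : exists x0, x0 \in L.
  apply/set0Pn/eqP => L0; move: KL1; rewrite L0 meas0 => /eqP.
  by rewrite eq_sym oner_eq0.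
have TG : setT \in G := closed_fam_setT x0 closedG.
set M := minrank r setT.
have ML_E : M :|: L \in calE G p.
  rewrite inE; apply/exists_inP; exists setT; rewrite // subsetT reprG //=.
  by rewrite meas_lexp_sup ?subsetUl //; apply/set0Pn; exists x0.
have KM_L : K :&: M \subset L.
  apply: subset_trans (setI_minrank_sub r (subsetT K)) _; apply/subsetP => x xM.
  apply: (subsetP (supp_sub (lexp_prob w_gt0 r K_neq0) KL1)).
  by rewrite inE lexp_gt0.
have L_eq : K :&: (M :|: L) = L by rewrite setIUr (setIidPr LK) (setUidPr KM_L).
rewrite -L_eq; apply: closed_famI (closed_augment cpsG _) KA _ _.
- exact: closed_fam_cover closedG.
- exact: (subsetP (@calE_sub_augment _ _ G p)) _ ML_E.
- by rewrite L_eq; apply/set0Pn; exists x0.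
Qed.

Lemma calE_augment_lexp : calE (augment G p) (lexp r w) = augment G p.
Proof.
apply/setP => E; apply/idP/idP.
  by rewrite inE => /exists_inP[K KA /andP[EK /eqP KE1]]; apply: mem_augment_lexp KE1.
move=> EA; rewrite inE; apply/exists_inP; exists E; rewrite // subxx.
by rewrite meas_lexp_sup ?minrank_sub ?(augment_neq0 EA) ?eqxx.
Qed.

End LexicographicExtension.

Theorem theorem3 (T : finType) (R : realType)
  (G : {set {set T}}) (p : {set T} -> {ffun T -> R}) :
  CPS G p -> closed_fam G ->
  (exists phat : {set T} -> {ffun T -> R},
     [/\ CPS (augment G p) phat,
         (forall G0 : {set T}, G0 \in G -> phat G0 = p G0),
         (forall K L : {set T}, K \in augment G p -> L \subset K ->
             meas (phat K) L = 1 -> L \in augment G p)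
       & augment (augment G p) phat = augment G p])
  /\ (one_closed G p <-> augment G p = G).
Proof.
move=> cpsG closedG.
have [r [w [w_gt0 reprG]]] :=
  CPS_lexp_repr (ltnSn #|cover G|) (closed_famU closedG) cpsG.
have calE_lexp := calE_augment_lexp cpsG closedG w_gt0 reprG.
split.
  exists (lexp r w); split.
  - by apply: CPS_lexp => // K; apply: augment_neq0.
  - by move=> G0 /reprG.
  - exact: mem_augment_lexp.
  - by rewrite augment_id calE_lexp // closed_augment // closed_fam_cover.
rewrite /one_closed; split=> [calEG | augG].
  by rewrite augment_id calEG.
by apply/eqP; rewrite eqEsubset CPS_sub_calE // andbT -{2}augG calE_sub_augment.
Qed.
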